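(* Consider the $N$-node uplink system described in the context, initialized with $d_{0,i}=D_{0,i}=1$ for all $i$ (so the AP's initial belief of each local age is the point mass at $1$), and operated under an arbitrary scheduling policy. Then for every slot $t\ge 1$ and every node $i$ there exist positive integers $k,m$ such that $D_{t,i}=k+m$ and the AP's belief $\bm{b}_{t,i}$ of the local age of node $i$ equals $\bm{c}_i(k,m)$, where $\bm{c}_i(k,m)=[c(d)]_{d\ge1}$ is defined by $c(d)=\lambda_i(1-\lambda_i)^{d-1}$ for $1\le d\le m$, $c(k+m)=(1-\lambda_i)^m$, and $c(d)=0$ for all other $d\ge 1$.
   Context: System: $N$ nodes $i=1,\dots,N$ and one access point (AP); time slots $t=0,1,2,\dots$. Node $i$ receives a status update in each slot independently with probability $\lambda_i\in(0,1]$ (independent across nodes and slots) and keeps only the latest one. Local age: $d_{t+1,i}=1$ if an update arrives at node $i$ in slot $t$, else $d_{t+1,i}=d_{t,i}+1$. In each slot the AP schedules at most one node; a scheduled node $i$'s transmission succeeds with probability $p_i\in(0,1]$ independently. If node $i$ is scheduled and succeeds in slot $t$, the AP observes $d_{t,i}$ and $D_{t+1,i}=d_{t,i}+1$; otherwise the AP observes nothing about $d_{t,i}$ and $D_{t+1,i}=D_{t,i}+1$. A scheduling policy chooses the action in each slot as a function of the AP's past actions and observations. The belief $\bm{b}_{t,i}=[b_{t,i}(d)]_{d\ge1}$ is the conditional distribution $b_{t,i}(d)=\Pr(d_{t,i}=d\mid \text{AP history of actions and observations up to slot } t-1)$; $D_{t,i}$ is known to the AP. *)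

From mathcomp Require Import all_boot all_order all_algebra.
Set Implicit Arguments. Unset Strict Implicit. Unset Printing Implicit Defensive.
Import Order.TTheory GRing.Theory Num.Theory.
Local Open Scope ring_scope.

Section System.
Variable N : nat.

(* One history entry: the action of the slot (None = nobody scheduled,
   Some j = node j scheduled) and the observation of the slot
   (Some d = AP observed local age d, None = nothing observed). *)
Definition entry := (option 'I_N * option nat)%type.
Definition history := seq entry.
Definition policy := history -> option 'I_N.

(* alpha s i : an update arrives at node i in slot s.
   sigma s i : a transmission of node i in slot s would succeed. *)
Fixpoint localAge (alpha : nat -> 'I_N -> bool) (s : nat) (i : 'I_N) : nat :=
  match s with
  | 0 => 1
  | s'.+1 => if alpha s' i then 1 else (localAge alpha s' i).+1
  end.

(* AP history of actions and observations in slots 0 .. s-1. *)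
Fixpoint hist (pi : policy) (alpha sigma : nat -> 'I_N -> bool) (s : nat)
  : history :=
  match s with
  | 0 => [::]
  | s'.+1 =>
    let h := hist pi alpha sigma s' in
    let a := pi h in
    let o := match a with
             | Some j => if sigma s' j then Some (localAge alpha s' j) else None
             | None => None
             end in
    rcons h (a, o)
  end.

Definition Dage (h : history) (i : 'I_N) : nat :=
  foldl (fun D (e : entry) =>
           match e with
           | (Some j, Some d) => if j == i then d.+1 else D.+1
           | _ => D.+1
           end) 1 h.

(* Finite-horizon sample space: arrivals and success bits for slots < t. *)
Definition bits (t : nat) := {ffun 'I_t -> {ffun 'I_N -> bool}}.
Definition omega (t : nat) := (bits t * bits t)%type.

Definition ext (t : nat) (f : bits t) : nat -> 'I_N -> bool :=
  fun s i => match insub s with Some s' => f s' i | None => false end.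

Variable R : realFieldType.
Variables (lam p : 'I_N -> R).

Definition weight (t : nat) (w : omega t) : R :=
  \prod_(s : 'I_t) \prod_(j : 'I_N)
     ((if w.1 s j then lam j else 1 - lam j) *
      (if w.2 s j then p j else 1 - p j)).

Definition Pr (t : nat) (E : pred (omega t)) : R :=
  \sum_(w : omega t | E w) weight w.

Definition histProb (pi : policy) (t : nat) (h : history) : R :=
  Pr (fun w : omega t => hist pi (ext w.1) (ext w.2) t == h).

Definition belief (pi : policy) (t : nat) (i : 'I_N) (h : history) (d : nat) : R :=
  Pr (fun w : omega t => (localAge (ext w.1) t i == d)
                         && (hist pi (ext w.1) (ext w.2) t == h))
  / histProb pi t h.
End System.

Definition cvec (R : realFieldType) (l : R) (k m d : nat) : R :=
  if ((1 <= d) && (d <= m))%N then l * (1 - l) ^+ d.-1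
  else if d == (k + m)%N then (1 - l) ^+ m
  else 0.

From mathcomp Require Import all_boot all_order all_algebra.
From mathcomp Require Import ring zify.
Set Implicit Arguments. Unset Strict Implicit. Unset Printing Implicit Defensive.
Import Order.TTheory GRing.Theory Num.Theory.
Local Open Scope ring_scope.

(* The AP's information about node j is summarised by the pair (k, m) = [belief_params h j]:
   the last local age k it received from j (initially 1) and the number m of slots since then
   (initially 0), so that D = k + m.  With [cmean l (k, m) f] the mean of f under c(k, m), we
   prove by induction on t that for every product functional
     E[prod_j f_j(d_{t,j}); history = h] = Pr(history = h) * prod_j cmean (lam j) (k_j, m_j) f_j,
   i.e. given the history the local ages are independent with laws c_j(k_j, m_j).  In one slot
   each f_j is first averaged over a possible arrival, which turns c(k, m) into c(k, m + 1); the
   observation then multiplies the factor of node j by its likelihood, which does not depend on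
   the age unless j was scheduled and succeeded, in which case it is a point mass at the reported
   age d and the posterior collapses to c(d, 1). *)

Section FfunRcons.
Variables (T : finType) (t : nat).

Definition ffun_rcons (g : {ffun 'I_t -> T}) (b : T) : {ffun 'I_t.+1 -> T} :=
  [ffun s : 'I_t.+1 => if insub (val s) : option 'I_t is Some s' then g s' else b].

Lemma ffun_rcons_widen g b (s : 'I_t) : ffun_rcons g b (widen_ord (leqnSn t) s) = g s.
Proof. by rewrite ffunE /= valK. Qed.

Lemma ffun_rcons_last g b : ffun_rcons g b ord_max = b.
Proof. by rewrite ffunE /= insubN // ltnn. Qed.

Lemma sum_ffun_rcons (V : nmodType) (F : {ffun 'I_t.+1 -> T} -> V) :
  \sum_f F f = \sum_g \sum_b F (ffun_rcons g b).
Proof.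
rewrite pair_big /= (reindex (fun gb => ffun_rcons gb.1 gb.2)) //=.
exists (fun f => ([ffun s => f (widen_ord (leqnSn t) s)], f ord_max)) => [[g b] _|f _].
  rewrite /= ffun_rcons_last; congr (_, _).
  by apply/ffunP => s; rewrite ffunE ffun_rcons_widen.
apply/ffunP => s; rewrite ffunE; case: insubP => [s' _ val_s'|].
  by rewrite ffunE; congr (f _); apply: val_inj.
rewrite -leqNgt => le_ts; congr (f _); apply: val_inj => /=.
by apply/eqP; rewrite eqn_leq le_ts -ltnS ltn_ord.
Qed.

End FfunRcons.

Lemma sum_ffun_bool_prod (R : comPzSemiRingType) (I : finType) (F : I -> bool -> R) :
  \sum_(a : {ffun I -> bool}) \prod_j F j (a j) = \prod_j (F j true + F j false).
Proof. by rewrite -bigA_distr_bigA; apply: eq_bigr => j _; rewrite big_bool. Qed.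

Section Sample.
Variable N : nat.
Implicit Types (pi : policy N).

Lemma eq_localAge (a a' : nat -> 'I_N -> bool) t j :
  (forall u k, (u < t)%N -> a u k = a' u k) -> localAge a t j = localAge a' t j.
Proof.
elim: t => [//|t IHt] eq_a /=.
by rewrite eq_a // IHt // => u k lt_ut; apply: eq_a; apply: ltnW.
Qed.

Lemma eq_hist pi (a a' s s' : nat -> 'I_N -> bool) t :
  (forall u k, (u < t)%N -> a u k = a' u k) ->
  (forall u k, (u < t)%N -> s u k = s' u k) ->
  hist pi a s t = hist pi a' s' t.
Proof.
elim: t => [//|t IHt] eq_a eq_s /=.
have lt_t u : (u < t)%N -> (u < t.+1)%N by apply: ltnW.
rewrite IHt => [|u k /lt_t|u k /lt_t]; [|exact: eq_a|exact: eq_s].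
case: (pi _) => [j|//]; rewrite eq_s // (eq_localAge (a' := a')) //.
by move=> u k /lt_t; apply: eq_a.
Qed.

Lemma localAge_gt0 (a : nat -> 'I_N -> bool) t j : (0 < localAge a t j)%N.
Proof. by case: t => [|t] //=; case: (a t j). Qed.

Lemma ext_rcons_lt t (g : bits N t) b u j :
  (u < t)%N -> ext (ffun_rcons g b) u j = ext g u j.
Proof.
move=> lt_ut; rewrite /ext (insubT (fun x => x < t.+1)%N (ltnW lt_ut)).
rewrite (insubT (fun x => x < t)%N lt_ut) -(ffun_rcons_widen g b).
by congr (ffun_rcons g b _ j); apply: val_inj.
Qed.

Lemma ext_rcons_last t (g : bits N t) b j : ext (ffun_rcons g b) t j = b j.
Proof.
rewrite /ext (insubT (fun x => x < t.+1)%N (ltnSn t)).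
by rewrite (_ : Sub t _ = ord_max) ?ffun_rcons_last //; apply: val_inj.
Qed.

Definition omega_rcons t (w : omega N t) (a b : {ffun 'I_N -> bool}) : omega N t.+1 :=
  (ffun_rcons w.1 a, ffun_rcons w.2 b).

Lemma sum_omegaS (V : nmodType) t (F : omega N t.+1 -> V) :
  \sum_w F w = \sum_(w : omega N t) \sum_a \sum_b F (omega_rcons w a b).
Proof.
have sum_pair u (G : omega N u -> V) : \sum_w G w = \sum_f1 \sum_f2 G (f1, f2).
  by rewrite pair_bigA; apply: eq_bigr => -[].
rewrite !sum_pair sum_ffun_rcons; apply: eq_bigr => g1 _.
by under eq_bigr do rewrite sum_ffun_rcons; rewrite exchange_big.
Qed.

Lemma localAge_omega_rcons t (w : omega N t) a b j :
  localAge (ext (omega_rcons w a b).1) t.+1 j =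
  if a j then 1%N else (localAge (ext w.1) t j).+1.
Proof.
rewrite /= ext_rcons_last (eq_localAge (a' := ext w.1)) // => u k.
exact: ext_rcons_lt.
Qed.

Definition observation (x : option 'I_N) (b : {ffun 'I_N -> bool}) (L : 'I_N -> nat) :=
  if x is Some j then (if b j then Some (L j) else None) else None.

Lemma hist_omega_rcons pi t (w : omega N t) a b (H := hist pi (ext w.1) (ext w.2) t) :
  hist pi (ext (omega_rcons w a b).1) (ext (omega_rcons w a b).2) t.+1 =
  rcons H (pi H, observation (pi H) b (localAge (ext w.1) t)).
Proof.
rewrite /= (@eq_hist pi _ (ext w.1) _ (ext w.2)) => [|u k|u k]; try exact: ext_rcons_lt.
case: (pi _) => [j|//] /=; rewrite ext_rcons_last (eq_localAge (a' := ext w.1)) //.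
by move=> u k; apply: ext_rcons_lt.
Qed.

Lemma size_hist pi (a s : nat -> 'I_N -> bool) t : size (hist pi a s t) = t.
Proof. by elim: t => [//|t IHt] /=; rewrite size_rcons IHt. Qed.

End Sample.

Section BeliefParams.
Variable N : nat.
Implicit Types (h : history N) (e : entry N) (km : nat * nat).

Definition update_params (j : 'I_N) e km : nat * nat :=
  if e is (Some j0, Some d) then (if j0 == j then (d, 1%N) else (km.1, km.2.+1))
  else (km.1, km.2.+1).

Definition belief_params h (j : 'I_N) : nat * nat :=
  foldl (fun km e => update_params j e km) (1%N, 0%N) h.

Lemma belief_params_rcons h e j :
  belief_params (rcons h e) j = update_params j e (belief_params h j).
Proof. by rewrite /belief_params foldl_rcons. Qed.

Lemma belief_params_snd_gt0 h j : h != [::] -> (0 < (belief_params h j).2)%N.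
Proof.
case/lastP: h => [//|h e] _; rewrite belief_params_rcons.
by case: e => [[j0|] [d|]] //=; case: (j0 == j).
Qed.

Lemma Dage_belief_params h j : Dage h j = ((belief_params h j).1 + (belief_params h j).2)%N.
Proof.
elim/last_ind: h => [//|h e IHh].
rewrite /Dage foldl_rcons -/(Dage h j) belief_params_rcons IHh.
by case: e => [[j0|] [d|]] /=; rewrite ?addnS //; case: (j0 == j); rewrite /= ?addn1 ?addnS.
Qed.

Lemma belief_params_hist_fst_gt0 pi (a s : nat -> 'I_N -> bool) t j :
  (0 < (belief_params (hist pi a s t) j).1)%N.
Proof.
elim: t => [//|t IHt]; rewrite /= belief_params_rcons.
case: (pi _) => [j0|//]; case: (s t j0) => //=.
by case: (j0 == j) => //=; apply: localAge_gt0.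
Qed.

End BeliefParams.

Section BeliefMean.
Variables (R : comPzRingType) (l : R).
Implicit Types (f g w : nat -> R) (km : nat * nat).

Definition cmean km f : R :=
  \sum_(i < km.2) l * (1 - l) ^+ i * f i.+1 + (1 - l) ^+ km.2 * f (km.1 + km.2)%N.

Definition avg_arrival f n : R := l * f 1%N + (1 - l) * f n.+1.

Lemma eq_cmean km f g : f =1 g -> cmean km f = cmean km g.
Proof. by move=> eq_fg; rewrite /cmean eq_fg; under eq_bigr do rewrite eq_fg. Qed.

Lemma cmeanD km f g : cmean km (fun n => f n + g n) = cmean km f + cmean km g.
Proof.
rewrite /cmean; under eq_bigr do rewrite mulrDr.
by rewrite big_split /=; ring.
Qed.

Lemma cmeanMr km f c : cmean km (fun n => f n * c) = cmean km f * c.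
Proof.
rewrite /cmean mulrDl big_distrl /=; under eq_bigr do rewrite mulrA.
by rewrite mulrA.
Qed.

Lemma cmeanS k m f :
  cmean (k, m.+1) f = l * f 1%N + (1 - l) * cmean (k, m) (fun n => f n.+1).
Proof.
rewrite /cmean /= big_ord_recl expr0 mulr1 -addrA mulrDr big_distrr /= addnS.
congr (_ + (_ + _)); last by rewrite exprS mulrA.
by apply: eq_bigr => i _; rewrite exprS; ring.
Qed.

Lemma cmean1 km : cmean km (fun=> 1) = 1.
Proof.
case: km => k; elim=> [|m IHm]; first by rewrite /cmean big_ord0 add0r mulr1.
by rewrite cmeanS IHm; ring.
Qed.

Lemma avg_arrival1 n : avg_arrival (fun=> 1) n = 1.
Proof. by rewrite /avg_arrival; ring. Qed.

Lemma cmean_avg_arrival k m f : cmean (k, m) (avg_arrival f) = cmean (k, m.+1) f.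
Proof.
rewrite cmeanS (@eq_cmean _ _ (fun n => (fun=> 1) n * (l * f 1%N) + f n.+1 * (1 - l))).
  by rewrite cmeanD !cmeanMr cmean1; ring.
by move=> n; rewrite /avg_arrival; ring.
Qed.

Lemma cmean_update_const k m f w c : (forall n, w n = c) ->
  cmean (k, m) (fun n => avg_arrival f n * w n) = cmean (k, m) w * cmean (k, m.+1) f.
Proof.
move=> w_c; have -> : cmean (k, m) w = c.
  by rewrite (@eq_cmean _ w (fun n => (fun=> 1) n * c)) ?cmeanMr ?cmean1 ?mul1r.
rewrite (@eq_cmean _ _ (fun n => avg_arrival f n * c)) => [|n]; last by rewrite w_c.
by rewrite cmeanMr cmean_avg_arrival mulrC.
Qed.

Lemma cmean_update_point km f w d : (forall n, n != d -> w n = 0) ->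
  cmean km (fun n => avg_arrival f n * w n) = cmean km w * cmean (d, 1%N) f.
Proof.
move=> w_d; have -> : cmean (d, 1%N) f = avg_arrival f d.
  by rewrite /cmean big_ord1 expr0 addn1 /avg_arrival; ring.
rewrite -cmeanMr; apply: eq_cmean => n; rewrite mulrC.
by case: (eqVneq n d) => [-> //|/w_d ->]; rewrite !mul0r.
Qed.

End BeliefMean.

Lemma cmean_indicator (R : realFieldType) (l : R) k m d : (0 < k)%N -> (0 < d)%N ->
  cmean l (k, m) (fun n => (n == d)%:R) = cvec l k m d.
Proof.
case: d => [//|d] k_gt0 _; rewrite /cmean /cvec /=.
rewrite (eq_bigr (fun i : 'I_m => if i == d :> nat then l * (1 - l) ^+ i else 0)).
  rewrite -big_mkcond (big_ord1_eq _ (fun i => l * (1 - l) ^+ i)) eq_sym.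
  case: ltnP => [lt_dm|le_md].
    by rewrite (_ : d.+1 == (k + m)%N = false) ?mulr0 ?addr0 //; apply/negbTE/eqP; lia.
  by rewrite add0r; case: eqP; rewrite ?mulr1 ?mulr0.
by move=> i _; rewrite eqSS; case: eqP; rewrite ?mulr1 ?mulr0.
Qed.

Section Factorization.
Variables (N : nat) (R : realFieldType) (lam p : 'I_N -> R) (pi : policy N).
Implicit Types (f : 'I_N -> nat -> R) (h : history N) (x : option 'I_N) (o : option nat).

Definition obs_lik x o j n : R :=
  if x == Some j then p j * (Some n == o)%:R + (1 - p j) * (None == o)%:R else 1.

Definition idle_lik x o : R := if x is None then (None == o)%:R else 1.

Definition Ehist t f h : R :=
  \sum_(w : omega N t | hist pi (ext w.1) (ext w.2) t == h)
    weight lam p w * \prod_j f j (localAge (ext w.1) t j).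

Lemma weight_omega_rcons t (w : omega N t) a b :
  weight lam p (omega_rcons w a b) = weight lam p w *
    \prod_j ((if a j then lam j else 1 - lam j) * (if b j then p j else 1 - p j)).
Proof.
rewrite /weight big_ord_recr /= !ffun_rcons_last; congr (_ * _).
by apply: eq_bigr => s _; rewrite !ffun_rcons_widen.
Qed.

Lemma sum_arrivals f (L : 'I_N -> nat) :
  \sum_(a : {ffun 'I_N -> bool}) (\prod_j (if a j then lam j else 1 - lam j)) *
     \prod_j f j (if a j then 1%N else (L j).+1) =
  \prod_j avg_arrival (lam j) (f j) (L j).
Proof.
rewrite -(sum_ffun_bool_prod (fun j c => (if c then lam j else 1 - lam j) *
                                          f j (if c then 1%N else (L j).+1))).
by apply: eq_bigr => a _; rewrite big_split.
Qed.

Lemma sum_successes x o (L : 'I_N -> nat) :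
  \sum_(b : {ffun 'I_N -> bool}) (\prod_j (if b j then p j else 1 - p j)) *
     (observation x b L == o)%:R =
  idle_lik x o * \prod_j obs_lik x o j (L j).
Proof.
case: x => [j0|] /=; last first.
  rewrite -big_distrl /= (sum_ffun_bool_prod (fun j c => if c then p j else 1 - p j)).
  by rewrite mulrC; congr (_ * _); apply: eq_bigr => j _; rewrite /obs_lik /=; ring.
rewrite mul1r (eq_bigr (fun b : {ffun _ -> bool} => \prod_j ((if b j then p j else 1 - p j) *
    (if j == j0 then ((if b j then Some (L j) else None) == o)%:R else 1)))).
  rewrite (sum_ffun_bool_prod (fun j c => (if c then p j else 1 - p j) *
    (if j == j0 then ((if c then Some (L j) else None) == o)%:R else 1))).
  apply: eq_bigr => j _; rewrite /obs_lik.
  case: (eqVneq j j0) => [->|ne]; first by rewrite !eqxx.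
  rewrite (_ : Some j0 == Some j = false); first ring.
  by apply/negbTE; rewrite eq_sym.
move=> b _; rewrite big_split /=; congr (_ * _).
by rewrite (bigD1 j0) //= eqxx big1 ?mulr1 // => j /negbTE ->.
Qed.

Lemma Ehist_slot t (w : omega N t) f h x o (L := localAge (ext w.1) t) :
  \sum_a \sum_b
    (if hist pi (ext (omega_rcons w a b).1) (ext (omega_rcons w a b).2) t.+1
          == rcons h (x, o)
     then weight lam p (omega_rcons w a b) *
          \prod_j f j (localAge (ext (omega_rcons w a b).1) t.+1 j)
     else 0) =
  (pi h == x)%:R * idle_lik x o *
  (if hist pi (ext w.1) (ext w.2) t == h
   then weight lam p w *
        \prod_j (avg_arrival (lam j) (f j) (L j) * obs_lik x o j (L j))
   else 0).
Proof.
have [hist_w|hist_w] := eqVneq (hist pi (ext w.1) (ext w.2) t) h; last first.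
  rewrite mulr0; apply: big1 => a _; apply: big1 => b _.
  by rewrite hist_omega_rcons eqseq_rcons (negbTE hist_w).
pose A (a : {ffun 'I_N -> bool}) := (\prod_j (if a j then lam j else 1 - lam j)) *
  \prod_j f j (if a j then 1%N else (L j).+1).
pose B (b : {ffun 'I_N -> bool}) := (\prod_j (if b j then p j else 1 - p j)) *
  (observation x b L == o)%:R.
transitivity ((pi h == x)%:R * weight lam p w * \sum_a \sum_b A a * B b).
  rewrite mulr_sumr; apply: eq_bigr => a _; rewrite mulr_sumr; apply: eq_bigr => b _.
  rewrite hist_omega_rcons hist_w eqseq_rcons eqxx xpair_eqE weight_omega_rcons.
  have -> : \prod_j f j (localAge (ext (omega_rcons w a b).1) t.+1 j) =
            \prod_j f j (if a j then 1%N else (L j).+1).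
    by apply: eq_bigr => j _; rewrite localAge_omega_rcons.
  rewrite big_split /A /B -/L /=.
  case: (eqVneq (pi h) x) => [->|_] /=; last by rewrite !mul0r.
  by case: (_ == o) => /=; ring.
rewrite -big_distrlr /A /B sum_arrivals sum_successes big_split /=; ring.
Qed.

Lemma Ehist_rcons t f h x o :
  Ehist t.+1 f (rcons h (x, o)) = (pi h == x)%:R * idle_lik x o *
    Ehist t (fun j n => avg_arrival (lam j) (f j) n * obs_lik x o j n) h.
Proof.
rewrite /Ehist big_mkcond sum_omegaS [in RHS]big_mkcond mulr_sumr.
by apply: eq_bigr => w _; rewrite Ehist_slot.
Qed.

Lemma cmean_update x o j km g :
  cmean (lam j) km (fun n => avg_arrival (lam j) g n * obs_lik x o j n) =
  cmean (lam j) km (obs_lik x o j) * cmean (lam j) (update_params j (x, o) km) g.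
Proof.
case: km => k m; rewrite /obs_lik.
have [->|xj] := eqVneq x (Some j); last first.
  have -> : update_params j (x, o) (k, m) = (k, m.+1).
    by case: x xj => [j0|] // xj; case: o => [d|] //=; case: (eqVneq j0 j) xj => [->|//]; rewrite eqxx.
  exact: (@cmean_update_const _ _ _ _ _ _ 1).
case: o => [d|] /=; last first.
  by apply: (@cmean_update_const _ _ _ _ _ _ (1 - p j)) => n; rewrite /=; ring.
rewrite eqxx; apply: cmean_update_point => n n_d.
by rewrite (_ : Some n == Some d = false) ?mulr0 ?add0r //; apply/negbTE.
Qed.

Lemma Ehist_factor t f h :
  Ehist t f h = Ehist t (fun _ _ => 1) h * \prod_j cmean (lam j) (belief_params h j) (f j).
Proof.
elim: t h f => [|t IHt] h f.
  rewrite /Ehist mulr_suml; apply: eq_bigr => w /eqP <- /=.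
  rewrite big1_eq mulr1; congr (_ * _); apply: eq_bigr => j _.
  by rewrite /cmean big_ord0 add0r expr0 mul1r.
case/lastP: h => [|h [x o]].
  have Ehist_nil g : Ehist t.+1 g [::] = 0.
    by rewrite /Ehist big_pred0 // => w; rewrite -size_eq0 size_hist.
  by rewrite !Ehist_nil mul0r.
rewrite !Ehist_rcons IHt [in RHS]IHt -!mulrA; congr (_ * (_ * (_ * _))).
rewrite -big_split; apply: eq_bigr => j _ /=.
rewrite belief_params_rcons cmean_update; congr (_ * _).
by apply: eq_cmean => n; rewrite avg_arrival1 mul1r.
Qed.

Lemma histProb_Ehist t h : histProb lam p pi t h = Ehist t (fun _ _ => 1) h.
Proof. by rewrite /histProb /Pr /Ehist; apply: eq_bigr => w _; rewrite big1 ?mulr1. Qed.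

Lemma belief_Ehist t i h d :
  Pr lam p (fun w : omega N t => (localAge (ext w.1) t i == d)
                                 && (hist pi (ext w.1) (ext w.2) t == h)) =
  Ehist t (fun j n => if j == i then (n == d)%:R else 1) h.
Proof.
rewrite /Pr /Ehist big_mkcond [RHS]big_mkcond; apply: eq_bigr => w _.
rewrite (bigD1 i) //= eqxx big1 ?mulr1 => [|j /negbTE -> //].
by case: (localAge _ t i == d); case: (hist _ _ _ t == h); rewrite ?mulr1 ?mulr0.
Qed.

Lemma belief_cmean t i h d : histProb lam p pi t h != 0 ->
  belief lam p pi t i h d = cmean (lam i) (belief_params h i) (fun n => (n == d)%:R).
Proof.
move=> hP; rewrite /belief belief_Ehist Ehist_factor -histProb_Ehist mulrC mulKf //.
rewrite (bigD1 i) //= eqxx big1 ?mulr1 // => j /negbTE ->.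
exact: cmean1.
Qed.

Lemma histProb_neq0_hist t h : histProb lam p pi t h != 0 ->
  exists w : omega N t, hist pi (ext w.1) (ext w.2) t = h.
Proof.
move=> hP; pose realizes (w : omega N t) := hist pi (ext w.1) (ext w.2) t == h.
have [w /eqP|no_w] := pickP realizes; first by exists w.
by move: hP; rewrite /histProb /Pr big_pred0 ?eqxx.
Qed.

End Factorization.

Theorem corollary1 (R : realFieldType) (N : nat) (lam p : 'I_N -> R)
  (hlam : forall i, 0 < lam i <= 1) (hp : forall i, 0 < p i <= 1)
  (pi : policy N) (t : nat) (i : 'I_N) (h : history N) :
  (0 < t)%N -> 0 < histProb lam p pi t h ->
  exists k m : nat, [/\ (0 < k)%N, (0 < m)%N, Dage h i = (k + m)%N &
    forall d : nat, (0 < d)%N -> belief lam p pi t i h d = cvec (lam i) k m d].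
Proof.
move=> t_gt0 /lt0r_neq0 hP; have [w hist_w] := histProb_neq0_hist hP.
have h_nil : h != [::] by rewrite -size_eq0 -lt0n -hist_w size_hist.
have k_gt0 := belief_params_hist_fst_gt0 pi (ext w.1) (ext w.2) t i.
rewrite hist_w in k_gt0.
exists (belief_params h i).1, (belief_params h i).2; split.
- exact: k_gt0.
- exact: belief_params_snd_gt0.
- exact: Dage_belief_params.
- by move=> d d_gt0; rewrite belief_cmean // -cmean_indicator // -surjective_pairing.
Qed.
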